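(* Let $H$ be a subgroup of a finite group $G$, let $\theta$ be a representation of $G$ and $\chi$ a representation of $H$. Let $\mathrm{Irr}(G\mid\chi)$ denote the set of irreducible representations $\rho$ of $G$ with $\langle\mathrm{Res}^G_H\rho,\chi\rangle\neq0$. Suppose every irreducible $\rho$ with $\langle\rho,\theta\rangle\neq0$ lies in $\mathrm{Irr}(G\mid\chi)$. Then there exists $\rho\in\mathrm{Irr}(G\mid\chi)$ with $\langle\rho,\theta\rangle\geq\dim(\theta)/\dim(\mathrm{Ind}_H^G\chi)$. *)

From HB Require Import structures.
From mathcomp Require Import all_boot all_order all_algebra all_fingroup all_solvable all_field all_character.
Set Implicit Arguments. Unset Strict Implicit. Unset Printing Implicit Defensive.

From HB Require Import structures.
From mathcomp Require Import all_boot all_order all_algebra all_fingroup all_solvable all_field all_character.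
Import Order.TTheory GRing.Theory Num.Theory.
Local Open Scope ring_scope.

(* Expand theta(1) = sum_i a_i chi_i(1) and (Ind chi)(1) = sum_i b_i chi_i(1)
   along the irreducible characters, with a_i = <chi_i, theta> and, by
   Frobenius reciprocity, b_i = <Res chi_i, chi>.  Both are natural numbers,
   and the hypothesis says b_i >= 1 whenever a_i != 0.  With
   c = theta(1) / (Ind chi)(1) the two sums satisfy sum a_i chi_i(1) =
   c * sum b_i chi_i(1), so some term with a_i != 0 has a_i >= c b_i >= c. *)

Lemma natr_ge1 {R : archiNumDomainType} (x : R) :
  x \is a Num.nat -> x != 0 -> 1 <= x.
Proof. by move/natrP=> [n ->]; rewrite pnatr_eq0 ler1n lt0n. Qed.

Lemma exists_scaled_term_le {R : numDomainType} {I : finType} {a b : I -> R} {c : R} :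
  0 <= c -> (forall i, 0 <= a i) -> (forall i, 0 <= b i) ->
  c * \sum_i b i <= \sum_i a i -> (exists i, a i != 0) -> exists2 i, a i != 0 & c * b i <= a i.
Proof.
move=> c_ge0 a_ge0 b_ge0 le_sums [i0 ai0_nz].
have [/existsP[i /andP[ai_nz le_cb_a]] | /existsPn small] :=
  boolP [exists i, (a i != 0) && (c * b i <= a i)]; first by exists i.
have lt_a_cb i : a i != 0 -> a i < c * b i.
  by move=> ai_nz; have := small i; rewrite ai_nz real_ltNge ?ger0_real ?mulr_ge0.
suff /lt_le_trans/(_ le_sums) : \sum_i a i < c * \sum_i b i by rewrite ltxx.
rewrite mulr_sumr (bigD1 i0) //= [X in _ < X](bigD1 i0) //=.
rewrite ltr_leD ?lt_a_cb //; apply: ler_sum => i _.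
have [-> | ai_nz] := eqVneq (a i) 0; first exact: mulr_ge0.
exact/ltW/lt_a_cb.
Qed.

Lemma Cnat_cfdot_irr_char {gT : finGroupType} {G : {group gT}} (i : Iirr G) {phi : 'CF(G)} :
  phi \is a character -> '['chi_i, phi] \is a Num.nat.
Proof. by move=> phi_char; rewrite cfdotC_char ?irr_char ?Cnat_cfdot_char_irr. Qed.

Lemma char1_sum_irr {gT : finGroupType} {G : {group gT}} (phi : 'CF(G)) :
  phi \is a character -> phi 1%g = \sum_i '['chi_i, phi] * 'chi_i 1%g.
Proof.
move=> phi_char; rewrite {1}(cfun_sum_cfdot phi) sum_cfunE.
by apply: eq_bigr => i _; rewrite cfunE cfdotC_char ?irr_char.
Qed.

Theorem lemma9p3 (gT : finGroupType) (G H : {group gT}) (theta : 'CF(G)) (chi : 'CF(H))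
  (sHG : H \subset G)
  (theta_char : theta \is a character) (theta_nz : theta != 0)
  (chi_char : chi \is a character) (chi_nz : chi != 0)
  (hyp : forall i : Iirr G, '['chi_i, theta] != 0 -> '['Res[H] 'chi_i, chi] != 0) :
  exists i : Iirr G, '['Res[H] 'chi_i, chi] != 0 /\
    '['chi_i, theta] >= theta 1%g / ('Ind[G] chi) 1%g.
Proof.
set c := theta 1%g / _.
have Ind_char : 'Ind[G] chi \is a character := cfInd_char G chi_char.
have Ind1_gt0 : 0 < ('Ind[G] chi) 1%g by rewrite char1_gt0 // cfInd_eq0.
have c_ge0 : 0 <= c by rewrite divr_ge0 ?char1_ge0 ?ltW.
pose a i := '['chi_i, theta] * 'chi_i 1%g.
pose b i := '['chi_i, 'Ind[G] chi] * 'chi_i 1%g.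
have term_ge0 (phi : 'CF(G)) (i : Iirr G) :
    phi \is a character -> 0 <= '['chi_i, phi] * 'chi_i 1%g.
  move=> phi_char; apply: mulr_ge0; last exact: ltW (irr1_gt0 i).
  exact/natr_ge0/Cnat_cfdot_irr_char.
have a_ge0 i : 0 <= a i by exact: term_ge0.
have b_ge0 i : 0 <= b i by exact: term_ge0.
have sums_le : c * \sum_i b i <= \sum_i a i.
  by rewrite -!char1_sum_irr // divfK ?gt_eqF.
have a_neq0 : exists i, a i != 0.
  have [i0] := neq0_has_constt theta_nz; rewrite irr_consttE => ai0_nz.
  by exists i0; rewrite /a mulf_neq0 ?irr1_neq0 // -cfdotC_char ?irr_char.
have [i ai_nz le_cbi_ai] := exists_scaled_term_le c_ge0 a_ge0 b_ge0 sums_le a_neq0.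
have theta_i_nz : '['chi_i, theta] != 0.
  by apply: contraNneq ai_nz; rewrite /a => ->; rewrite mul0r.
have Res_i_nz := hyp i theta_i_nz.
exists i; split=> //.
have le_cInd_theta : c * '['chi_i, 'Ind[G] chi] <= '['chi_i, theta].
  by rewrite -(ler_pM2r (irr1_gt0 i)) -mulrA.
apply: le_trans le_cInd_theta; have Ind_i_nat := Cnat_cfdot_irr_char i Ind_char.
by rewrite ler_peMr // natr_ge1 // -cfdot_Res_l.
Qed.
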